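(* For all $s\ge1$, $\sum_{k=0}^{3}P_k(s)\,E(s+k,0)=0$, where $P_0(s)=2s^3+s^2-8s+5$, $P_1(s)=-26s^3-93s^2-82s-30$, $P_2(s)=-26s^3-141s^2-226s-81$, $P_3(s)=2s^3+17s^2+40s+16$.
   Context: A $p$-string of length $s$ is a correctly matched string of $s$ pairs of parentheses; there are $C_s=\frac{1}{s+1}\binom{2s}{s}$ of them. Given $p$-strings $U$ (upper), $W$ (lower) of length $s$, the meander graph $\Gamma^1_{2s-1}$ is obtained by marking points $0,1,\dots,2s$ on the $x$-axis, taking the segment $[0,2s]$, joining points $a,b$ by an upper semicircle for each matched pair of $U$ at positions $a<b$ (positions $1,\dots,2s$), and points $a-1,b-1$ by a lower semicircle for each matched pair of $W$ at positions $a<b$; the vertices are $1,\dots,2s-1$. A pierced circle at position $i$ ($1\le i\le2s-2$) is present if vertices $i,i+1$ are joined both by an upper and a lower semicircle. $E(s,0)$ is the number of pairs $(U,W)$ whose meander graph has no pierced circle; equivalently $E(s,0)=\sum_{m=0}^{s}(-1)^m\binom{2s-m-1}{m}C_{s-m}^2$. *)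

From mathcomp Require Import all_boot all_order all_algebra.
Set Implicit Arguments. Unset Strict Implicit. Unset Printing Implicit Defensive.
Import GRing.Theory Num.Theory.

Definition catalan (s : nat) : nat := 'C(s.*2, s) %/ s.+1.

(* E(s,0) = sum_{m=0}^{s} (-1)^m binom(2s-m-1, m) C_{s-m}^2, as an integer.
   (Only used for s >= 1, where 2s-m-1 is never truncated for m <= s.) *)
Local Open Scope ring_scope.
Definition E0 (s : nat) : int :=
  \sum_(0 <= m < s.+1)
     (-1) ^+ m * ('C(s.*2 - m - 1, m))%:Z * ((catalan (s - m)) ^ 2)%:Z.

From mathcomp Require Import all_boot all_order all_algebra.
From mathcomp Require Import zify ring lra.
Import GRing.Theory Num.Theory.
Local Open Scope ring_scope.

(* Reversing the order of summation writes E(n,0) as the sum over i < n of the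
   hypergeometric term t(n,i) = (-1)^(n+i+1) C(n+i,2i+1) C_(i+1)^2, which vanishes
   for i >= n.  Creative telescoping provides a certificate R(s,i), a rational
   multiple of t(s+3,i), with sum_k P_k(s) t(s+k,i) = R(s,i+1) - R(s,i); as the
   ratios t(n,i)/t(n+1,i) and t(n,i+1)/t(n,i) are rational, this is an identity
   of rational functions.  Summing over i < s+3 leaves R(s,s+3) - R(s,0) = 0. *)

Lemma catalan_mulS n : (catalan n * n.+1 = 'C(n.*2, n))%N.
Proof.
have binE : 'C(n.*2, n) = (n.+1 * ('C(n.*2, n) - 'C(n.*2, n.+1)))%N.
  rewrite mulnBr mulSn mul_bin_left (_ : n.*2 - n = n)%N; lia.
by rewrite /catalan {1}binE mulKn // mulnC -binE.
Qed.

Lemma central_binS n : (n.+1 * 'C(n.+1.*2, n.+1) = 2 * n.*2.+1 * 'C(n.*2, n))%N.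
Proof.
have downE := mul_bin_down n.*2.+1 n.
rewrite /= (_ : n.*2.+1 - n = n.+1)%N in downE; last by lia.
by rewrite -mul_bin_diag doubleS /= -mulnA downE -!muln2; ring.
Qed.

Lemma catalanS n : (catalan n.+1 * n.+2 = 2 * n.*2.+1 * catalan n)%N.
Proof.
apply/eqP; rewrite -(eqn_pmul2r (ltn0Sn n)); apply/eqP.
by rewrite catalan_mulS [LHS]mulnC central_binS -!mulnA catalan_mulS.
Qed.

Section E0Term.
Variable F : realFieldType.

Definition E0_term (n i : nat) : F :=
  - (-1) ^+ (n + i) * 'C(n + i, i.*2.+1)%:R * (catalan i.+1)%:R ^+ 2.

Lemma E0_term_eq0 n i : (n <= i)%N -> E0_term n i = 0.
Proof. by move=> le_ni; rewrite /E0_term bin_small ?mulr0 ?mul0r //; lia. Qed.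

Lemma E0_term_recn n i :
  E0_term n i = (i%:R - n%:R) / (n + i).+1%:R * E0_term n.+1 i.
Proof.
have [le_in | lt_ni] := leqP i n; last by rewrite !E0_term_eq0 ?mulr0 //; lia.
have downE := mul_bin_down (n + i).+1 i.*2.+1.
rewrite /= (_ : (n + i).+1 - i.*2.+1 = n - i)%N in downE; last by lia.
have binE : 'C(n + i, i.*2.+1)%:R
    = (n%:R - i%:R) / (n + i).+1%:R * 'C((n + i).+1, i.*2.+1)%:R :> F.
  by rewrite -natrB // -mulrA mulrCA -!natrM -downE natrM mulKf ?pnatr_eq0.
by rewrite /E0_term binE addSn (exprS _ (n + i)); ring.
Qed.

Lemma E0_term_reci n i :
  E0_term n i.+1 = 2 * (2 * i%:R + 3) * (n + i).+1%:R * (i%:R + 1 - n%:R)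
                   / (i.+1%:R * i.+3%:R ^+ 2) * E0_term n i.
Proof.
have [lt_in | le_ni] := ltnP i n; last by rewrite !E0_term_eq0 ?mulr0 //; lia.
have diagE := mul_bin_diag (n + i).+1 i.*2.+1.
have leftE := mul_bin_left (n + i).+1 i.*2.+2.
rewrite /= in diagE; rewrite (_ : (n + i).+1 - i.*2.+2 = n - i.+1)%N in leftE; last by lia.
have binE : 'C((n + i).+1, i.*2.+3)%:R
    = (n%:R - i.+1%:R) * (n + i).+1%:R * 'C(n + i, i.*2.+1)%:R
      / (i.*2.+2%:R * i.*2.+3%:R) :> F.
  have nz : i.*2.+2%:R * i.*2.+3%:R != 0 :> F by rewrite -natrM pnatr_eq0.
  apply: (mulIf nz); rewrite divfK // -natrB // -!natrM; congr (_%:R).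
  by rewrite -mulnA diagE [LHS]mulnC -mulnA leftE; ring.
have catE : (catalan i.+2)%:R = (2 * i.+1.*2.+1)%:R / i.+3%:R * (catalan i.+1)%:R :> F.
  by rewrite mulrAC -natrM -(catalanS i.+1) natrM mulfK ?pnatr_eq0.
rewrite /E0_term addnS doubleS (exprS _ (n + i)) binE catE -!muln2 !natrM.
have i_ge0 : 0 <= i%:R :> F := ler0n F i.
by field; rewrite !lt0r_neq0 //; lra.
Qed.

Lemma E0E n N : (0 < n)%N -> (n <= N)%N ->
  (E0 n)%:~R = \sum_(0 <= i < N) E0_term n i.
Proof.
move=> n_gt0 le_nN.
rewrite (big_cat_nat (leq0n n) le_nN) /= [X in _ + X]big_nat_cond.
rewrite [X in _ + X]big1 ?addr0; last first.
  by move=> i /andP[/andP[le_ni _] _]; rewrite E0_term_eq0.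
rewrite /E0 rmorph_sum big_nat_recr //= bin_small ?mulr0 ?mul0r ?rmorph0 ?addr0; last by lia.
rewrite big_nat_rev /=; apply: eq_big_nat => i /andP[_ lt_in].
rewrite add0n (_ : n - (n - i.+1) = i.+1)%N; last by lia.
rewrite (_ : n.*2 - (n - i.+1) - 1 = n + i)%N; last by lia.
rewrite (_ : n - i.+1 = n + i - i.*2.+1)%N ?bin_sub; try lia.
have signE : (-1) ^+ (n + i) = - (-1) ^+ (n + i - i.*2.+1) :> F.
  rewrite -[in LHS](subnK (_ : i.*2.+1 <= n + i)%N); last by lia.
  by rewrite exprD -[X in _ * X]signr_odd /= odd_double mulrN1.
by rewrite /E0_term signE opprK !rmorphM /= rmorphXn rmorphN1 expr2.
Qed.

Definition P0 (x : F) : F := 2 * x ^+ 3 + x ^+ 2 - 8 * x + 5.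
Definition P1 (x : F) : F := - 26 * x ^+ 3 - 93 * x ^+ 2 - 82 * x - 30.
Definition P2 (x : F) : F := - 26 * x ^+ 3 - 141 * x ^+ 2 - 226 * x - 81.
Definition P3 (x : F) : F := 2 * x ^+ 3 + 17 * x ^+ 2 + 40 * x + 16.

Definition wz_cert (s i : nat) : F :=
  - 2 * (2 * s%:R + 1) * (2 * s%:R + 3) * (2 * s%:R + 5) * i%:R * (i%:R + 2) ^+ 2
  / ((s + i).+1 * (s + i).+2 * (s + i).+3)%:R * E0_term s.+3 i.

Lemma E0_term_telescoping s i :
  P0 s%:R * E0_term s i + P1 s%:R * E0_term s.+1 i + P2 s%:R * E0_term s.+2 i
  + P3 s%:R * E0_term s.+3 i = wz_cert s i.+1 - wz_cert s i.
Proof.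
rewrite /wz_cert E0_term_reci (E0_term_recn s) (E0_term_recn s.+1) (E0_term_recn s.+2).
have s_ge0 : 0 <= s%:R :> F := ler0n F s.
have i_ge0 : 0 <= i%:R :> F := ler0n F i.
by rewrite /P0 /P1 /P2 /P3; field; rewrite !lt0r_neq0 //; lra.
Qed.

Lemma E0_recurrence s : (0 < s)%N ->
  P0 s%:R * (E0 s)%:~R + P1 s%:R * (E0 s.+1)%:~R + P2 s%:R * (E0 s.+2)%:~R
  + P3 s%:R * (E0 s.+3)%:~R = 0.
Proof.
move=> s_gt0; rewrite !(E0E _ s.+3) //; try lia.
rewrite !mulr_sumr -!big_split /=.
rewrite (telescope_sumr_eq (wz_cert s) _ (leq0n _) (fun i _ => E0_term_telescoping s i)).
by rewrite /wz_cert E0_term_eq0 // !mulr0 !mul0r subr0.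
Qed.

End E0Term.

Theorem lemma4p2 (s : nat) (hs : (1 <= s)%N) :
  let z : int := s%:Z in
  (2 * z ^+ 3 + z ^+ 2 - 8 * z + 5) * E0 s
  + (- 26 * z ^+ 3 - 93 * z ^+ 2 - 82 * z - 30) * E0 s.+1
  + (- 26 * z ^+ 3 - 141 * z ^+ 2 - 226 * z - 81) * E0 s.+2
  + (2 * z ^+ 3 + 17 * z ^+ 2 + 40 * z + 16) * E0 s.+3 = 0.
Proof.
move=> z; apply: (@intr_inj rat).
rewrite rmorph0 -[RHS](@E0_recurrence rat _ hs) /P0 /P1 /P2 /P3 /z.
ring.
Qed.
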